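(* Let $M$ be a sparse paving matroid of rank $r$ on $n$ elements with $2r\leq n$. Then, averaged over all cyclic orderings of $E(M)$, the number of $r$-intervals that are circuit-hyperplanes of $M$ is less than two.
   Context: A matroid $M$ of rank $r$ is sparse paving if every nonspanning circuit is a hyperplane; equivalently, every $r$-subset of $E(M)$ is a basis or a circuit-hyperplane (a set that is both a circuit and a hyperplane). A cyclic ordering (cycle) on $E(M)$ is a cyclic permutation $\sigma$ of $E(M)$ consisting of a single cycle through all $n$ elements; there are $(n-1)!$ of them. A $k$-interval in $\sigma$ is a set of $k$ cyclically-consecutive elements, i.e., $\{x,\sigma(x),\dots,\sigma^{k-1}(x)\}$ for some $x$. *)

From mathcomp Require Import all_boot all_order all_algebra all_fingroup.
Set Implicit Arguments. Unset Strict Implicit. Unset Printing Implicit Defensive.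

Section Matroids.
Variable T : finType.

Definition base_axiom (B : {set {set T}}) : Prop :=
  B != set0 /\
  forall B1 B2, B1 \in B -> B2 \in B ->
    forall x, x \in B1 :\: B2 ->
      exists2 y, y \in B2 :\: B1 & (B1 :\ x) :|: [set y] \in B.

Record matroid := Matroid { bases : {set {set T}}; bases_ax : base_axiom bases }.

Variable M : matroid.

Definition indep (X : {set T}) : bool := [exists B in bases M, X \subset B].

Definition circuit (C : {set T}) : bool :=
  ~~ indep C && [forall D : {set T}, (D \proper C) ==> indep D].

Definition rk (X : {set T}) : nat := \max_(Y : {set T} | (Y \subset X) && indep Y) #|Y|.

Definition mrank : nat := rk [set: T].

Definition flat (F : {set T}) : bool := [forall x, (x \notin F) ==> (rk F < rk (x |: F))].

Definition hyperplane (H : {set T}) : bool := flat H && (rk H + 1 == mrank).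

Definition spanning (X : {set T}) : bool := rk X == mrank.

Definition circuit_hyperplane (X : {set T}) : bool := circuit X && hyperplane X.

Definition sparse_paving : Prop :=
  forall C, circuit C -> ~~ spanning C -> hyperplane C.

End Matroids.

Definition cyclic_ordering (T : finType) (s : {perm T}) : bool :=
  [forall x, porbit s x == [set: T]].

Definition intervals (T : finType) (s : {perm T}) (k : nat) : {set {set T}} :=
  [set [set (s ^+ i)%g x | i : 'I_k] | x : T].

Definition num_ch_intervals (T : finType) (M : matroid T) (s : {perm T}) : nat :=
  #|[set I in intervals s (mrank M) | circuit_hyperplane M I]|.

(* Let A be the set of anchored pairs (s, x): s a cyclic ordering whose
   r-interval starting at x is a circuit-hyperplane; |A| bounds the total number
   of circuit-hyperplane intervals. Given such a pair, a position i < r and an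
   element b outside the interval, conjugating s by the transposition of b with
   the i-th element of the interval gives a cyclic ordering whose r-interval
   starting at the image of x differs from a circuit-hyperplane in exactly one
   element, so it is not one: circuit-hyperplanes C1, C2 with
   C1 - a1 = C2 - a2 coincide. This swap is injective, so
   |A| r (n - r) <= (|cyc| n - |A|) r, i.e. |A| (n - r + 1) <= |cyc| n, and
   2r <= n gives |A| < 2 |cyc|. *)

From mathcomp Require Import all_boot all_order all_algebra all_fingroup.
From mathcomp Require Import zify.
Import GRing.Theory Num.Theory.
Set Implicit Arguments. Unset Strict Implicit. Unset Printing Implicit Defensive.

Section MatroidFacts.
Variables (T : finType) (M : matroid T).

Lemma indepS (X Y : {set T}) : Y \subset X -> indep M X -> indep M Y.
Proof.
move=> sYX /existsP[B /andP[BM sXB]]; apply/existsP; exists B.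
by rewrite BM (subset_trans sYX sXB).
Qed.

Lemma base_indep B : B \in bases M -> indep M B.
Proof. by move=> BM; apply/existsP; exists B; rewrite BM subxx. Qed.

Lemma indep0 : indep M set0.
Proof.
have [/set0Pn[B BM] _] := bases_ax M.
exact: indepS (sub0set B) (base_indep BM).
Qed.

Lemma base_eq_of_subset B1 B2 :
  B1 \in bases M -> B2 \in bases M -> B1 \subset B2 -> B1 = B2.
Proof.
move=> B1M B2M sB12; apply/eqP; rewrite eqEsubset sB12 /=.
apply/subsetP=> x xB2; apply/negPn/negP=> xB1.
have [_ exchange] := bases_ax M.
have xD : x \in B2 :\: B1 by rewrite inE xB1.
have [y] := exchange _ _ B2M B1M x xD.
by rewrite inE => /andP[/negP yB2 /(subsetP sB12)].
Qed.

Lemma card_bases_eq B1 B2 :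
  B1 \in bases M -> B2 \in bases M -> #|B1| = #|B2|.
Proof.
move=> + B2M.
elim: {B1}_.+1 {-2}B1 (ltnSn #|B1 :\: B2|) => // n IH B1 ltB1 B1M.
have [/eqP|[x xD]] := set_0Vmem (B1 :\: B2).
  by rewrite setD_eq0 => sB12; rewrite (base_eq_of_subset B1M B2M sB12).
have [_ exchange] := bases_ax M.
have [y yD B1'M] := exchange _ _ B1M B2M x xD.
move: xD yD; rewrite !inE => /andP[xB2 xB1] /andP[yB1 yB2].
have <- : #|(B1 :\ x) :|: [set y]| = #|B1|.
  by rewrite setUC cardsU1 !inE (negbTE yB1) andbF (cardsD1 x B1) xB1.
apply: IH B1'M; rewrite -ltnS (leq_trans _ ltB1) // ltnS.
have -> : ((B1 :\ x) :|: [set y]) :\: B2 = (B1 :\: B2) :\ x.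
  apply/setP=> z; rewrite !inE.
  by have [->|_] := eqVneq z y; rewrite ?yB2 ?orbF ?andbF // andbCA.
by rewrite [X in _ < X](cardsD1 x) !inE xB2 xB1.
Qed.

Lemma leq_card_rk (X Y : {set T}) : Y \subset X -> indep M Y -> #|Y| <= rk M X.
Proof.
move=> sYX iY; rewrite /rk.
by apply: (leq_bigmax_cond (F := fun Z : {set T} => #|Z|)); rewrite sYX.
Qed.

Lemma rk_witness (X : {set T}) :
  exists2 Y : {set T}, (Y \subset X) && indep M Y & #|Y| = rk M X.
Proof.
have : 0 < #|[pred Y : {set T} | (Y \subset X) && indep M Y]|.
  by apply/card_gt0P; exists set0; rewrite inE sub0set indep0.
by case/(eq_bigmax_cond (fun Y : {set T} => #|Y|)) => Y; exists Y.
Qed.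

Lemma card_base B : B \in bases M -> #|B| = mrank M.
Proof.
move=> BM; apply/eqP; rewrite /mrank eqn_leq leq_card_rk ?subsetT ?base_indep //=.
have [Y /andP[_ /existsP[B' /andP[B'M sYB']]] <-] := rk_witness [set: T].
by rewrite (card_bases_eq BM B'M) subset_leq_card.
Qed.

Lemma indep_base (X : {set T}) : indep M X -> mrank M <= #|X| -> X \in bases M.
Proof.
case/existsP=> B /andP[BM sXB] leX.
suff -> : X = B by [].
by apply/eqP; rewrite eqEcard sXB (card_base BM).
Qed.

Lemma circuit_dep C : circuit M C -> ~~ indep M C.
Proof. by case/andP. Qed.

Lemma circuit0 : ~~ circuit M set0.
Proof. by apply/negP=> /circuit_dep; rewrite indep0. Qed.

Lemma circuit_indep_setD1 C a : circuit M C -> a \in C -> indep M (C :\ a).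
Proof.
by move=> /andP[_ /forallP/(_ (C :\ a))/implyP] + aC; apply; rewrite properD1.
Qed.

Lemma rk_circuit C : circuit M C -> (rk M C).+1 = #|C|.
Proof.
move=> cC; have [C0|[a aC]] := set_0Vmem C.
  by rewrite C0 (negbTE circuit0) in cC.
apply/eqP; rewrite eqn_leq; apply/andP; split.
  have [Y /andP[sYC iY] <-] := rk_witness C.
  rewrite proper_card // properEneq sYC andbT.
  by apply: contraTneq iY => ->; exact: circuit_dep.
rewrite (cardsD1 a C) aC add1n ltnS.
exact: leq_card_rk (subsetDl C [set a]) (circuit_indep_setD1 cC aC).
Qed.

Lemma card_circuit_hyperplane C : circuit_hyperplane M C -> #|C| = mrank M.
Proof. by case/and3P=> cC _ /eqP <-; rewrite addn1 rk_circuit. Qed.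

Lemma indep_setU1_base D : indep M D -> #|D|.+1 = mrank M ->
  exists2 u, u \notin D & u |: D \in bases M.
Proof.
case/existsP=> B /andP[BM sDB] cardD.
have [u /setDP[uB uD]] : exists u, u \in B :\: D.
  by apply/card_gt0P; rewrite cardsD (setIidPr sDB) (card_base BM) -cardD subSnn.
exists u => //; suff -> : u |: D = B by [].
apply/eqP; rewrite eqEcard subUset sub1set uB sDB cardsU1 uD.
by rewrite (card_base BM) -cardD add1n ltnSn.
Qed.

Lemma hyperplane_setU1_base H a : hyperplane M H -> a \notin H ->
  exists2 Y, Y \in bases M & Y \subset a |: H.
Proof.
case/andP=> /forallP/(_ a)/implyP + /eqP rkH aH => /(_ aH) rk_aH.
have [Y /andP[sY iY] rkY] := rk_witness (a |: H).
by exists Y => //; apply: (indep_base iY); rewrite rkY -rkH addn1.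
Qed.

Lemma eq_circuit_hyperplane_setD1 C1 C2 a1 a2 :
    circuit_hyperplane M C1 -> circuit_hyperplane M C2 ->
    a1 \in C1 -> a2 \in C2 -> C1 :\ a1 = C2 :\ a2 -> C1 = C2.
Proof.
move=> ch1 /andP[cC2 _] a1C1 a2C2 eqD; have /andP[cC1 hC1] := ch1.
have [a12|a12] := eqVneq a1 a2.
  by rewrite -(setD1K a1C1) -(setD1K a2C2) eqD a12.
set D := C1 :\ a1 in eqD.
have C1E : C1 = a1 |: D by rewrite setD1K.
have C2E : C2 = a2 |: D by rewrite eqD setD1K.
have a2C1 : a2 \notin C1.
  apply: contra (negbT (setD11 a2 C2)) => a2C1.
  by rewrite -eqD !inE a2C1 eq_sym a12.
have notbase w : w \in [set a1; a2] -> w |: D \notin bases M.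
  case/set2P=> ->; apply: contra (@base_indep _) _; rewrite -?C1E -?C2E.
    exact: circuit_dep cC1.
  exact: circuit_dep cC2.
have cardD : #|D|.+1 = mrank M.
  by rewrite -(card_circuit_hyperplane ch1) (cardsD1 a1 C1) a1C1.
have [u uD uDM] := indep_setU1_base (circuit_indep_setD1 cC1 a1C1) cardD.
have [Y YM sY] := hyperplane_setU1_base hC1 a2C1.
have Ysub w : w \in Y -> w \notin D -> w \in [set a1; a2].
  by move/(subsetP sY); rewrite C1E !inE => /or3P[] ->; rewrite ?orbT.
have [uY|uY] := boolP (u \in Y).
  by rewrite (negPf (notbase u (Ysub u uY uD))) in uDM.
have [_ exchange] := bases_ax M.
have uuDY : u \in (u |: D) :\: Y by rewrite !inE eqxx uY.
have [w /setDP[wY]] := exchange _ _ uDM YM u uuDY.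
rewrite in_setU1 negb_or setU1K // setUC => /andP[_ wD].
by rewrite (negPf (notbase w (Ysub w wY wD))).
Qed.
End MatroidFacts.

Lemma card_pairs_dep (I J : finType) (A : pred I) (B : I -> pred J) :
  #|[set u : I * J | A u.1 && B u.1 u.2]| = \sum_(i | A i) #|[set j | B i j]|.
Proof.
rewrite -sum1dep_card -(pair_big_dep A B (fun _ _ => 1)).
by apply: eq_bigr => i _; rewrite sum1dep_card.
Qed.

Section Intervals.
Variable T : finType.
Implicit Types (s t : {perm T}) (C : {set T}).

Definition interval s k x : {set T} := [set (s ^+ i)%g x | i : 'I_k].

Lemma mem_interval s k x (i : 'I_k) : (s ^+ i)%g x \in interval s k x.
Proof. exact: imset_f. Qed.

Lemma permJX s t i x : ((s ^ t) ^+ i)%g (t x) = t ((s ^+ i)%g x).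
Proof. by rewrite -conjXg permJ. Qed.

Lemma interval_conjg s t k x : interval (s ^ t)%g k (t x) = t @: interval s k x.
Proof. by rewrite -imset_comp; apply: eq_imset => i; rewrite /= permJX. Qed.

Lemma cyclic_ordering_conjg s t : cyclic_ordering s -> cyclic_ordering (s ^ t)%g.
Proof.
move=> /forallP cyc_s; apply/forallP => x; apply/eqP/setP => y; rewrite inE.
have /porbitP[i yi] : (t^-1)%g y \in porbit s ((t^-1)%g x).
  by rewrite (eqP (cyc_s _)) inE.
by apply/porbitP; exists i; rewrite -{1}(permKV t x) permJX -yi permKV.
Qed.

Lemma tperm_imset_setD1 C a b : a \in C -> b \notin C ->
  (tperm a b @: C) :\ b = C :\ a.
Proof.
move=> aC bC; apply/setP => y; rewrite !inE (can_imset_pre _ (tpermK a b)) inE.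
case: tpermP => [->|->|/eqP-> /eqP->] //; first by rewrite eqxx (negbTE bC) !andbF.
by rewrite eqxx (negbTE bC) andbF.
Qed.

End Intervals.

Section SwapCounting.
Variables (T : finType) (P : pred {set T}) (k : nat).
Hypothesis card_P : forall C, P C -> #|C| = k.
Hypothesis P_setD1_inj : forall C1 C2 a1 a2, P C1 -> P C2 ->
  a1 \in C1 -> a2 \in C2 -> C1 :\ a1 = C2 :\ a2 -> C1 = C2.

Local Notation cyclic := [set s : {perm T} | cyclic_ordering s].

Definition anchored : {set {perm T} * T} :=
  [set u | cyclic_ordering u.1 && P (interval u.1 k u.2)].

Lemma card_anchored :
  #|anchored| = \sum_(s | cyclic_ordering s) #|[set x | P (interval s k x)]|.
Proof.
exact: (card_pairs_dep (fun s => cyclic_ordering s) (fun s x => P (interval s k x))).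
Qed.

Lemma anchored_sub : anchored \subset setX cyclic [set: T].
Proof. by apply/subsetP=> u; rewrite !inE andbT => /andP[]. Qed.

Lemma sum_card_P_intervals_le :
  \sum_(s | cyclic_ordering s) #|[set I in intervals s k | P I]| <= #|anchored|.
Proof.
rewrite card_anchored; apply: leq_sum => s _.
apply: leq_trans (leq_imset_card (interval s k) _); apply: subset_leq_card.
by apply/subsetP => _ /setIdP[/imsetP[x _ ->] Px]; rewrite imset_f ?inE.
Qed.

Definition swap (v : {perm T} * T * 'I_k * T) : {perm T} * T * 'I_k :=
  let: (s, x, i, b) := v in
  let t := tperm ((s ^+ i)%g x) b in ((s ^ t)%g, t x, i).

Definition swappable : {set {perm T} * T * 'I_k * T} :=
  [set v | (v.1 \in setX anchored [set: 'I_k]) &&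
           (v.2 \notin interval v.1.1.1 k v.1.1.2)].

Lemma card_swappable : #|swappable| = #|anchored| * k * (#|T| - k).
Proof.
rewrite (card_pairs_dep (mem (setX anchored [set: 'I_k]))
                        (fun q b => b \notin interval q.1.1 k q.1.2)).
rewrite (eq_bigr (fun _ => #|T| - k)) ?sum_nat_const ?cardsX ?cardsT ?card_ord //.
case=> [[s x] i]; rewrite !inE andbT => /andP[_ /card_P /= cardI].
by rewrite -(cardsC (interval s k x)) cardI addKn.
Qed.

Lemma tperm_imset_notP C a b :
  P C -> a \in C -> b \notin C -> ~~ P (tperm a b @: C).
Proof.
move=> PC aC bC; apply/negP => PtC.
have btC : b \in tperm a b @: C by rewrite -{1}(tpermL a b) imset_f.
have eqC := P_setD1_inj PtC PC btC aC (tperm_imset_setD1 aC bC).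
by rewrite -eqC btC in bC.
Qed.

Lemma swap_notin_anchored v : v \in swappable ->
  swap v \in setX (setX cyclic [set: T] :\: anchored) [set: 'I_k].
Proof.
case: v => [[[s x] i] b]; rewrite !inE /= andbT => /andP[/andP[cyc_s PI] bI].
rewrite !cyclic_ordering_conjg //= interval_conjg !andbT.
exact: tperm_imset_notP PI (mem_interval s x i) bI.
Qed.

Lemma swap_inj : {in swappable &, injective swap}.
Proof.
have swap_end (s : {perm T}) x i b :
    ((s ^ tperm ((s ^+ i)%g x) b) ^+ i)%g (tperm ((s ^+ i)%g x) b x) = b.
  by rewrite permJX tpermL.
move=> [[[s1 x1] i1] b1] [[[s2 x2] i] b2]; rewrite !inE /= !andbT.
move=> /andP[/andP[_ PI1] bI1] /andP[/andP[_ PI2] bI2] [Es Ex Ei]; subst i1.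
have eb : b1 = b2 by rewrite -(swap_end s1 x1 i b1) Es Ex swap_end.
subst b2; set a1 := (s1 ^+ i)%g x1 in Es Ex bI1 *.
set a2 := (s2 ^+ i)%g x2 in Es Ex bI2 *.
have a1I1 : a1 \in interval s1 k x1 by exact: mem_interval.
have a2I2 : a2 \in interval s2 k x2 by exact: mem_interval.
have eqD : interval s1 k x1 :\ a1 = interval s2 k x2 :\ a2.
  rewrite -(tperm_imset_setD1 a1I1 bI1) -(tperm_imset_setD1 a2I2 bI2).
  by rewrite -!interval_conjg Es Ex.
have eqI := P_setD1_inj PI1 PI2 a1I1 a2I2 eqD.
have ea : a1 = a2.
  apply/eqP; apply: contraT => a12.
  have : a1 \in interval s2 k x2 :\ a2 by rewrite !inE a12 -eqI.
  by rewrite -eqD !inE eqxx.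
rewrite ea in Es Ex; have ex := perm_inj Ex.
have es : s1 = s2 by rewrite -(conjgK (tperm a2 b1) s1) Es conjgK.
by rewrite es ex.
Qed.

Lemma card_anchored_swap :
  #|anchored| * k * (#|T| - k) <= (#|cyclic| * #|T| - #|anchored|) * k.
Proof.
have /subset_leq_card : swap @: swappable \subset
    setX (setX cyclic [set: T] :\: anchored) [set: 'I_k].
  by apply/subsetP=> _ /imsetP[v vS ->]; exact: swap_notin_anchored.
rewrite (card_in_imset swap_inj) card_swappable cardsX cardsD (setIidPr anchored_sub).
by rewrite !cardsX !cardsT card_ord.
Qed.

Hypothesis P0 : ~~ P set0.

Lemma card_anchored_bound : #|anchored| * (#|T| - k).+1 <= #|cyclic| * #|T|.
Proof.
have [->|[[s x] /setIdP[_ PI]]] := set_0Vmem anchored; first by rewrite cards0.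
have k_gt0 : 0 < k.
  by rewrite -(card_P PI) card_gt0; apply: contraNneq P0 => <-.
have le_anchored : #|anchored| <= #|cyclic| * #|T|.
  by rewrite -cardsT -cardsX subset_leq_card // anchored_sub.
have := card_anchored_swap; rewrite mulnAC leq_pmul2r // mulnS.
lia.
Qed.

Lemma sum_card_P_intervals_lt : 0 < #|cyclic| -> 2 * k <= #|T| ->
  \sum_(s | cyclic_ordering s) #|[set I in intervals s k | P I]| < 2 * #|cyclic|.
Proof.
move=> cyclic_gt0 le_2k_n; apply: leq_ltn_trans sum_card_P_intervals_le _.
have := card_anchored_bound; nia.
Qed.

End SwapCounting.

Theorem lemma2p7 (T : finType) (M : matroid T) :
  sparse_paving M -> 2 * mrank M <= #|T| ->
  ((\sum_(s : {perm T} | cyclic_ordering s) num_ch_intervals M s)%:R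
     / (#|[set s : {perm T} | cyclic_ordering s]|)%:R < 2 :> rat)%R.
Proof.
move=> _ le_2r_n.
have [->|cyclic_gt0] := posnP #|[set s : {perm T} | cyclic_ordering s]|.
  by rewrite invr0 mulr0 ltr0n.
rewrite ltr_pdivrMr ?ltr0n // -natrM ltr_nat.
apply: (sum_card_P_intervals_lt (P := circuit_hyperplane M)) => //.
- exact: card_circuit_hyperplane.
- exact: eq_circuit_hyperplane_setD1.
- by rewrite /circuit_hyperplane (negbTE (circuit0 M)).
Qed.
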